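(* For every term $M$ of the distant Bang calculus $\mathtt{dBang}$, the Taylor expansion of its Böhm tree equals its Taylor normal form: $\mathcal{T}(\mathtt{BT}_{!}(M)) = \mathrm{nf}(\mathcal{T}(M))$.
   Context: \textbf{dBang.} Terms: $M,N ::= x \mid \lambda x.M \mid MN \mid M[N/x] \mid\ !M \mid \mathrm{der}\,M$, where $M[N/x]$ is an explicit substitution binding $x$ in $M$; terms are taken up to $\alpha$-conversion and $M\{N/x\}$ denotes capture-avoiding meta-level substitution. List contexts: $L ::= \square \mid L[N/x]$, with $L\langle M\rangle$ the filling of the hole. Root rules: $L\langle\lambda x.M\rangle N \mapsto L\langle M[N/x]\rangle$; $M[L\langle !N\rangle/x]\mapsto L\langle M\{N/x\}\rangle$; $\mathrm{der}(L\langle !N\rangle)\mapsto L\langle N\rangle$ (bound variables of $L$ chosen fresh). Full reduction $\to$ is the closure of these rules under arbitrary contexts; $\to^*$ its reflexive-transitive closure. \textbf{Resource calculus.} Resource terms: $m,n ::= x\mid \lambda x.m\mid mn\mid m[n/x]\mid \mathrm{der}\,m\mid [m_1,\dots,m_k]$ ($k\ge 0$, finite multisets called bags). Resource list contexts $l ::= \square\mid l[n/x]$. One-step resource reduction relates a resource term to a resource term or to the symbol $\emptyset$ (zero), by the rules: $\mathrm{der}(l\langle[m]\rangle)\to l\langle m\rangle$; $\mathrm{der}(l\langle[m_1,\dots,m_k]\rangle)\to\emptyset$ if $k\neq 1$; $l\langle\lambda x.m\rangle n\to l\langle m[n/x]\rangle$; $m[l\langle[n_1,\dots,n_k]\rangle/x]\to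 l\langle m\{n_{\sigma(1)}/x_1,\dots,n_{\sigma(k)}/x_k\}\rangle$ for each permutation $\sigma$ of $\{1,\dots,k\}$ when $x$ has exactly $k$ free occurrences $x_1,\dots,x_k$ in $m$ (each occurrence replaced linearly), and $m[l\langle[n_1,\dots,n_k]\rangle/x]\to\emptyset$ otherwise; closed under all contexts (a term containing a subterm reducing to $\emptyset$ reduces to $\emptyset$). A resource term is normal if it has no reduct. \textbf{Taylor expansion.} The approximation relation $m\sqsubset M$ is defined by: $x\sqsubset x$; $\lambda x.m\sqsubset\lambda x.M$ if $m\sqsubset M$; $mn\sqsubset MN$ if $m\sqsubset M,n\sqsubset N$; $m[n/x]\sqsubset M[N/x]$ if $m\sqsubset M,n\sqsubset N$; $\mathrm{der}\,m\sqsubset\mathrm{der}\,M$ if $m\sqsubset M$; $[m_1,\dots,m_k]\sqsubset\ !M$ for any $k\ge0$ if $m_i\sqsubset M$ for all $i$. The same rules apply when $M$ contains the constant $\bot$ (there is no rule for $\bot$, so nothing approximates $\bot$). $\mathcal T(M)=\{m\mid m\sqsubset M\}$, and $\mathrm{nf}(\mathcal T(M))$ is the set of normal resource terms $p$ such that $m\to^* p$ for some $m\in\mathcal T(M)$. \textbf{Böhm trees.} Extend the syntax of terms with a constant $\bot$. For such terms, $A\sqsubseteq B$ means $A$ is obtained from $B$ by replacing some subterms by $\bot$. A (dBang) approximant is a term of the extended syntax having no subterm of any of the forms $L\langle\lambda x.A\rangle B$, $L\langle\bot\rangle B$, $\mathrm{der}(L\langle !A\rangle)$, $\mathrm{der}(L\langle\bot\rangle)$,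 $A[L\langle !B\rangle/x]$, $A[L\langle\bot\rangle/x]$. The set of approximants of $M$ is $\mathcal A(M)=\{A \text{ approximant}\mid \exists N,\ M\to^* N,\ A\sqsubseteq N\}$, and $\mathtt{BT}_!(M)=\mathcal A(M)$. Its Taylor expansion is $\mathcal T(\mathtt{BT}_!(M))=\bigcup_{A\in\mathcal A(M)}\mathcal T(A)$. *)

From Stdlib Require Import List Arith Permutation Relations.
Import ListNotations.

(** * dBang terms, extended with the constant Bot (bottom).
    [ES t u] is the explicit substitution t[u/x]: it binds index 0 in t. *)
Inductive term : Type :=
| Var : nat -> term
| Lam : term -> term
| App : term -> term -> term
| ES  : term -> term -> term
| Bang : term -> term
| Der : term -> term
| Bot : term.

Fixpoint bot_free (t : term) : Prop :=
  match t with
  | Var _ => True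
  | Lam t => bot_free t
  | App t u => bot_free t /\ bot_free u
  | ES t u => bot_free t /\ bot_free u
  | Bang t => bot_free t
  | Der t => bot_free t
  | Bot => False
  end.

Fixpoint lift (k c : nat) (t : term) : term :=
  match t with
  | Var i => if c <=? i then Var (i + k) else Var i
  | Lam t => Lam (lift k (S c) t)
  | App t u => App (lift k c t) (lift k c u)
  | ES t u => ES (lift k (S c) t) (lift k c u)
  | Bang t => Bang (lift k c t)
  | Der t => Der (lift k c t)
  | Bot => Bot
  end.

Fixpoint subst (c : nat) (t : term) (N : term) : term :=
  match t with
  | Var i => if i =? c then lift c 0 N
             else if c <? i then Var (pred i) else Var i
  | Lam t => Lam (subst (S c) t N)
  | App t u => App (subst c t N) (subst c u N)
  | ES t u => ES (subst (S c) t N) (subst c u N)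
  | Bang t => Bang (subst c t N)
  | Der t => Der (subst c t N)
  | Bot => Bot
  end.

(** List contexts L = □[N1/x1]...[Nk/xk], represented by [N1; ...; Nk]
    (innermost first); [fill L t] is L<t>; the hole is under [length L]
    binders. *)
Fixpoint fill (L : list term) (t : term) : term :=
  match L with
  | [] => t
  | N :: L' => fill L' (ES t N)
  end.

(** Full reduction: root rules closed under all contexts.  Bound
    variables of L are fresh: realised by lifting. *)
Inductive step : term -> term -> Prop :=
| st_beta L M N :
    step (App (fill L (Lam M)) N) (fill L (ES M (lift (length L) 0 N)))
| st_subst L M N :
    step (ES M (fill L (Bang N))) (fill L (subst 0 (lift (length L) 1 M) N))
| st_der L N :
    step (Der (fill L (Bang N))) (fill L N)
| st_lam t t' : step t t' -> step (Lam t) (Lam t')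
| st_app_l t t' u : step t t' -> step (App t u) (App t' u)
| st_app_r t u u' : step u u' -> step (App t u) (App t u')
| st_es_l t t' u : step t t' -> step (ES t u) (ES t' u)
| st_es_r t u u' : step u u' -> step (ES t u) (ES t u')
| st_bang t t' : step t t' -> step (Bang t) (Bang t')
| st_der_c t t' : step t t' -> step (Der t) (Der t').

Definition steps : term -> term -> Prop := clos_refl_trans term step.

Inductive bot_le : term -> term -> Prop :=
| bl_bot B : bot_le Bot B
| bl_var i : bot_le (Var i) (Var i)
| bl_lam A B : bot_le A B -> bot_le (Lam A) (Lam B)
| bl_app A1 A2 B1 B2 : bot_le A1 B1 -> bot_le A2 B2 -> bot_le (App A1 A2) (App B1 B2)
| bl_es A1 A2 B1 B2 : bot_le A1 B1 -> bot_le A2 B2 -> bot_le (ES A1 A2) (ES B1 B2)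
| bl_bang A B : bot_le A B -> bot_le (Bang A) (Bang B)
| bl_der A B : bot_le A B -> bot_le (Der A) (Der B).

Inductive subterm : term -> term -> Prop :=
| sub_refl t : subterm t t
| sub_lam s t : subterm s t -> subterm s (Lam t)
| sub_app_l s t u : subterm s t -> subterm s (App t u)
| sub_app_r s t u : subterm s u -> subterm s (App t u)
| sub_es_l s t u : subterm s t -> subterm s (ES t u)
| sub_es_r s t u : subterm s u -> subterm s (ES t u)
| sub_bang s t : subterm s t -> subterm s (Bang t)
| sub_der s t : subterm s t -> subterm s (Der t).

Definition forbidden (t : term) : Prop :=
  exists (L : list term) (A B : term),
    t = App (fill L (Lam A)) B \/
    t = App (fill L Bot) B \/
    t = Der (fill L (Bang A)) \/
    t = Der (fill L Bot) \/
    t = ES A (fill L (Bang B)) \/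
    t = ES A (fill L Bot).

Definition approximant (A : term) : Prop :=
  forall s, subterm s A -> ~ forbidden s.

(** BT_!(M) = A(M), the set of approximants of M. *)
Definition BT (M : term) (A : term) : Prop :=
  approximant A /\ exists N, steps M N /\ bot_le A N.

(** * Resource calculus.  Bags are represented by lists; they are
    identified up to permutation via [req] below. *)
Inductive rterm : Type :=
| RVar : nat -> rterm
| RLam : rterm -> rterm
| RApp : rterm -> rterm -> rterm
| RES  : rterm -> rterm -> rterm
| RDer : rterm -> rterm
| RBag : list rterm -> rterm.

Fixpoint rlift (k c : nat) (m : rterm) : rterm :=
  match m with
  | RVar i => if c <=? i then RVar (i + k) else RVar i
  | RLam m => RLam (rlift k (S c) m)
  | RApp m n => RApp (rlift k c m) (rlift k c n)
  | RES m n => RES (rlift k (S c) m) (rlift k c n)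
  | RDer m => RDer (rlift k c m)
  | RBag ms => RBag (map (rlift k c) ms)
  end.

Fixpoint occ (c : nat) (m : rterm) : nat :=
  match m with
  | RVar i => if i =? c then 1 else 0
  | RLam m => occ (S c) m
  | RApp m n => occ c m + occ c n
  | RES m n => occ (S c) m + occ c n
  | RDer m => occ c m
  | RBag ms => list_sum (map (occ c) ms)
  end.

(** [lsub c m ns m']: m' is obtained from m by replacing each free
    occurrence of index [c] linearly by a distinct element of the list
    [ns] (every element used exactly once, in any assignment, i.e. for
    any permutation), indices above [c] being decremented. *)
Inductive lsub : nat -> rterm -> list rterm -> rterm -> Prop :=
| ls_var_eq c n : lsub c (RVar c) [n] (rlift c 0 n)
| ls_var_lt c i : i < c -> lsub c (RVar i) [] (RVar i)
| ls_var_gt c j : c <= j -> lsub c (RVar (S j)) [] (RVar j)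
| ls_lam c m ns m' : lsub (S c) m ns m' -> lsub c (RLam m) ns (RLam m')
| ls_app c m n ns ns1 ns2 m' n' :
    Permutation ns (ns1 ++ ns2) -> lsub c m ns1 m' -> lsub c n ns2 n' ->
    lsub c (RApp m n) ns (RApp m' n')
| ls_es c m n ns ns1 ns2 m' n' :
    Permutation ns (ns1 ++ ns2) -> lsub (S c) m ns1 m' -> lsub c n ns2 n' ->
    lsub c (RES m n) ns (RES m' n')
| ls_der c m ns m' : lsub c m ns m' -> lsub c (RDer m) ns (RDer m')
| ls_bag_nil c : lsub c (RBag []) [] (RBag [])
| ls_bag_cons c m ms ns ns1 ns2 m' ms' :
    Permutation ns (ns1 ++ ns2) -> lsub c m ns1 m' -> lsub c (RBag ms) ns2 (RBag ms') ->
    lsub c (RBag (m :: ms)) ns (RBag (m' :: ms')).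

Fixpoint rfill (l : list rterm) (m : rterm) : rterm :=
  match l with
  | [] => m
  | n :: l' => rfill l' (RES m n)
  end.

(** One-step resource reduction; [None] is the zero [∅]. *)
Inductive rstep : rterm -> option rterm -> Prop :=
| rs_der1 l m : rstep (RDer (rfill l (RBag [m]))) (Some (rfill l m))
| rs_der0 l ms : length ms <> 1 -> rstep (RDer (rfill l (RBag ms))) None
| rs_beta l m n :
    rstep (RApp (rfill l (RLam m)) n) (Some (rfill l (RES m (rlift (length l) 0 n))))
| rs_subst l m ns m' :
    lsub 0 (rlift (length l) 1 m) ns m' ->
    rstep (RES m (rfill l (RBag ns))) (Some (rfill l m'))
| rs_subst0 l m ns :
    occ 0 m <> length ns -> rstep (RES m (rfill l (RBag ns))) None
| rs_lam m r : rstep m r -> rstep (RLam m) (option_map RLam r)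
| rs_app_l m n r : rstep m r -> rstep (RApp m n) (option_map (fun m' => RApp m' n) r)
| rs_app_r m n r : rstep n r -> rstep (RApp m n) (option_map (fun n' => RApp m n') r)
| rs_es_l m n r : rstep m r -> rstep (RES m n) (option_map (fun m' => RES m' n) r)
| rs_es_r m n r : rstep n r -> rstep (RES m n) (option_map (fun n' => RES m n') r)
| rs_der_c m r : rstep m r -> rstep (RDer m) (option_map RDer r)
| rs_bag l1 m l2 r : rstep m r ->
    rstep (RBag (l1 ++ m :: l2)) (option_map (fun m' => RBag (l1 ++ m' :: l2)) r).

Definition rsteps : rterm -> rterm -> Prop :=
  clos_refl_trans rterm (fun m m' => rstep m (Some m')).

Definition rnormal (m : rterm) : Prop := forall r, ~ rstep m r.

Inductive req : rterm -> rterm -> Prop :=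
| rq_var i : req (RVar i) (RVar i)
| rq_lam m m' : req m m' -> req (RLam m) (RLam m')
| rq_app m n m' n' : req m m' -> req n n' -> req (RApp m n) (RApp m' n')
| rq_es m n m' n' : req m m' -> req n n' -> req (RES m n) (RES m' n')
| rq_der m m' : req m m' -> req (RDer m) (RDer m')
| rq_bag ms1 ms2 ms3 : Permutation ms1 ms2 -> Forall2 req ms2 ms3 ->
    req (RBag ms1) (RBag ms3).

Inductive rapprox : rterm -> term -> Prop :=
| ra_var i : rapprox (RVar i) (Var i)
| ra_lam m M : rapprox m M -> rapprox (RLam m) (Lam M)
| ra_app m n M N : rapprox m M -> rapprox n N -> rapprox (RApp m n) (App M N)
| ra_es m n M N : rapprox m M -> rapprox n N -> rapprox (RES m n) (ES M N)
| ra_der m M : rapprox m M -> rapprox (RDer m) (Der M)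
| ra_bag ms M : (forall m, In m ms -> rapprox m M) -> rapprox (RBag ms) (Bang M).

Definition taylor (M : term) (m : rterm) : Prop := rapprox m M.

Definition nf_taylor (M : term) (p : rterm) : Prop :=
  rnormal p /\ exists m, taylor M m /\ rsteps m p.

Definition taylor_BT (M : term) (m : rterm) : Prop :=
  exists A, BT M A /\ taylor A m.

Definition rset_eq (S1 S2 : rterm -> Prop) : Prop :=
  forall p, (exists q, req p q /\ S1 q) <-> (exists q, req p q /\ S2 q).

(* The Taylor expansion of an approximant consists of normal resource terms,
   since a resource redex can only approximate one of the shapes excluded from
   approximants; and Taylor expansion simulates dBang reduction backwards: if
   M ->* N, every element of T(N) is a resource reduct of an element of T(M).
   Hence T(BT(M)) is contained in nf(T(M)).

   Conversely, resource reduction is simulated forwards once the approximation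
   relation is relaxed to allow dBang reduction before each constructor is
   matched.  A normal resource term p related in this way to M approximates
   some reduct N of M: confluence joins the reducts required by the elements of
   a bag, and normal terms persist in the expansion along reduction.  Since p
   is normal, it still approximates the direct approximant of N, obtained by
   replacing its forbidden subterms with Bot, and that approximant is in BT(M). *)

From Stdlib Require Import List Arith Lia Permutation Relations FunctionalExtensionality.
Import ListNotations.

(** * Renaming and simultaneous substitution *)

Definition upren (xi : nat -> nat) (i : nat) : nat :=
  match i with 0 => 0 | S j => S (xi j) end.

Fixpoint ren (xi : nat -> nat) (t : term) : term :=
  match t with
  | Var i => Var (xi i)
  | Lam t => Lam (ren (upren xi) t)
  | App t u => App (ren xi t) (ren xi u)
  | ES t u => ES (ren (upren xi) t) (ren xi u)
  | Bang t => Bang (ren xi t)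
  | Der t => Der (ren xi t)
  | Bot => Bot
  end.

Definition up (s : nat -> term) (i : nat) : term :=
  match i with 0 => Var 0 | S j => ren S (s j) end.

Fixpoint inst (s : nat -> term) (t : term) : term :=
  match t with
  | Var i => s i
  | Lam t => Lam (inst (up s) t)
  | App t u => App (inst s t) (inst s u)
  | ES t u => ES (inst (up s) t) (inst s u)
  | Bang t => Bang (inst s t)
  | Der t => Der (inst s t)
  | Bot => Bot
  end.

Ltac term_congr t :=
  induction t; intros; simpl;
  repeat match goal with IH : forall _, _ |- _ => rewrite IH; clear IH end;
  try reflexivity; f_equal; f_equal; apply functional_extensionality; intros [|]; simpl;
  try reflexivity.

Lemma ren_ren t xi zeta : ren xi (ren zeta t) = ren (fun i => xi (zeta i)) t.
Proof. revert xi zeta; term_congr t. Qed.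

Lemma inst_ren t s xi : inst s (ren xi t) = inst (fun i => s (xi i)) t.
Proof. revert s xi; term_congr t. Qed.

Lemma ren_inst t s xi : ren xi (inst s t) = inst (fun i => ren xi (s i)) t.
Proof. revert s xi; term_congr t; rewrite !ren_ren; reflexivity. Qed.

Lemma inst_inst t s r : inst s (inst r t) = inst (fun i => inst s (r i)) t.
Proof. revert s r; term_congr t; rewrite inst_ren, ren_inst; reflexivity. Qed.

Lemma ren_as_inst t xi : ren xi t = inst (fun i => Var (xi i)) t.
Proof. revert xi; term_congr t. Qed.

Lemma ren_id t xi : (forall i, xi i = i) -> ren xi t = t.
Proof.
  revert xi; induction t; intros xi Hxi; simpl; f_equal; auto;
    apply IHt || apply IHt1; intros [|i]; simpl; congruence.
Qed.

Lemma lift_as_ren t k c : lift k c t = ren (fun i => if c <=? i then i + k else i) t.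
Proof.
  revert k c; induction t; intros; simpl;
    try rewrite IHt; try rewrite IHt1; try rewrite IHt2; try reflexivity;
    [destruct (c <=? n); reflexivity | ..];
    f_equal; f_equal; extensionality i; destruct i; simpl; try reflexivity;
    destruct (c <=? i); reflexivity.
Qed.

Lemma lift0_as_ren t k : lift k 0 t = ren (fun i => i + k) t.
Proof. apply lift_as_ren. Qed.

Lemma lift_0 t c : lift 0 c t = t.
Proof. rewrite lift_as_ren. apply ren_id. intros i. destruct (c <=? i); lia. Qed.

Lemma lift0_add t a : lift (a + 1) 0 t = lift a 0 (lift 1 0 t).
Proof. rewrite !lift0_as_ren, ren_ren. f_equal. extensionality i. lia. Qed.

Definition subst_fun (c : nat) (N : term) (i : nat) : term :=
  if i =? c then lift c 0 N else if c <? i then Var (pred i) else Var i.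

Lemma up_subst_fun c N : up (subst_fun c N) = subst_fun (S c) N.
Proof.
  extensionality i. destruct i as [|i]; [reflexivity|]. unfold subst_fun; simpl.
  destruct (i =? c).
  - rewrite !lift0_as_ren, ren_ren. f_equal. extensionality x. lia.
  - change (S c <? S i) with (c <? i).
    destruct (Nat.ltb_spec c i); [destruct i; [lia | reflexivity] | reflexivity].
Qed.

Lemma subst_as_inst t c N : subst c t N = inst (subst_fun c N) t.
Proof.
  revert c; induction t; intros; simpl;
    try rewrite IHt; try rewrite IHt1; try rewrite IHt2; try rewrite up_subst_fun; reflexivity.
Qed.

Lemma subst_var_lt c i N : i < c -> subst c (Var i) N = Var i.
Proof. intros; simpl. destruct (Nat.eqb_spec i c), (Nat.ltb_spec c i); try lia; reflexivity. Qed.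

Lemma subst_var_eq c N : subst c (Var c) N = lift c 0 N.
Proof. simpl. rewrite Nat.eqb_refl. reflexivity. Qed.

Lemma subst_var_gt c j N : c <= j -> subst c (Var (S j)) N = Var j.
Proof.
  intros; cbn [subst]. destruct (Nat.eqb_spec (S j) c), (Nat.ltb_spec c (S j)); try lia; reflexivity.
Qed.

Fixpoint upn (k : nat) (s : nat -> term) : nat -> term :=
  match k with 0 => s | S k => up (upn k s) end.

Lemma upn_shift k s i : upn k s (i + k) = ren (fun x => x + k) (s i).
Proof.
  induction k; simpl.
  - rewrite Nat.add_0_r. symmetry. apply ren_id. intros; lia.
  - rewrite Nat.add_succ_r. simpl. rewrite IHk, ren_ren. f_equal. extensionality x. lia.
Qed.

Fixpoint instL (s : nat -> term) (L : list term) : list term :=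
  match L with
  | [] => []
  | N :: L' => inst (upn (length L') s) N :: instL s L'
  end.

Lemma length_instL s L : length (instL s L) = length L.
Proof. induction L; simpl; auto. Qed.

Lemma inst_fill L t s : inst s (fill L t) = fill (instL s L) (inst (upn (length L) s) t).
Proof. revert t; induction L; intros; simpl; [reflexivity | rewrite IHL; reflexivity]. Qed.

Lemma fill_app L1 L2 t : fill (L1 ++ L2) t = fill L2 (fill L1 t).
Proof. revert t; induction L1; intros; simpl; auto. Qed.

Definition cons_shift (k : nat) (N : term) (i : nat) : term :=
  match i with 0 => N | S j => Var (j + k) end.

Lemma subst_lift_as_inst M N k : subst 0 (lift k 1 M) N = inst (cons_shift k N) M.
Proof.
  rewrite subst_as_inst, lift_as_ren, inst_ren. f_equal. extensionality i.
  destruct i; unfold subst_fun; simpl; [rewrite lift_0|]; reflexivity.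
Qed.

Lemma inst_upn_lift0 N k s : inst (upn k s) (lift k 0 N) = lift k 0 (inst s N).
Proof.
  rewrite !lift0_as_ren, inst_ren, ren_inst. f_equal. extensionality i. apply upn_shift.
Qed.

Lemma inst_upn_cons_shift M N k s :
  inst (upn k s) (inst (cons_shift k N) M) = inst (cons_shift k (inst (upn k s) N)) (inst (up s) M).
Proof.
  rewrite !inst_inst. f_equal. extensionality i. destruct i; simpl; [reflexivity|].
  rewrite upn_shift, inst_ren, ren_as_inst. reflexivity.
Qed.

Lemma inst_upn_cons_shift_lift0 P k m N :
  inst (upn k (cons_shift m N)) (lift k 0 (lift 1 0 P)) = lift (k + m) 0 P.
Proof.
  rewrite !lift0_as_ren, ren_ren, inst_ren, ren_as_inst. f_equal. extensionality i.
  replace (i + 1 + k) with (S i + k) by lia. rewrite upn_shift. simpl. f_equal. lia.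
Qed.

Lemma inst_cons_shift_lift1 Q k N : inst (cons_shift k N) (lift 1 1 Q) = inst (cons_shift (k + 1) N) Q.
Proof.
  rewrite lift_as_ren, inst_ren. f_equal. extensionality i. destruct i; simpl; [reflexivity|].
  f_equal. lia.
Qed.

Lemma inst_upn_cons_shift_lift1 Q k m C N :
  inst (upn k (cons_shift m C)) (inst (cons_shift k N) (lift 1 1 Q))
  = inst (cons_shift (k + m) (inst (upn k (cons_shift m C)) N)) Q.
Proof.
  rewrite inst_cons_shift_lift1, inst_inst. f_equal. extensionality i. destruct i; simpl; [reflexivity|].
  replace (i + (k + 1)) with (S i + k) by lia. rewrite upn_shift. simpl. f_equal. lia.
Qed.

(** * Confluence of dBang, by parallel reduction and complete development *)

Lemma steps_map (f : term -> term) :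
  (forall x y, step x y -> step (f x) (f y)) -> forall a b, steps a b -> steps (f a) (f b).
Proof. intros Hf a b H; induction H; [apply rt_step | apply rt_refl | eapply rt_trans]; eauto. Qed.

Lemma steps_lam a b : steps a b -> steps (Lam a) (Lam b).
Proof. apply steps_map; constructor; auto. Qed.

Lemma steps_bang a b : steps a b -> steps (Bang a) (Bang b).
Proof. apply steps_map; constructor; auto. Qed.

Lemma steps_der a b : steps a b -> steps (Der a) (Der b).
Proof. apply steps_map; constructor; auto. Qed.

Lemma steps_app a b c d : steps a b -> steps c d -> steps (App a c) (App b d).
Proof.
  intros. apply rt_trans with (App b c).
  - apply (steps_map (fun x => App x c)); [constructor|]; auto.
  - apply (steps_map (App b)); [constructor|]; auto.
Qed.

Lemma steps_es a b c d : steps a b -> steps c d -> steps (ES a c) (ES b d).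
Proof.
  intros. apply rt_trans with (ES b c).
  - apply (steps_map (fun x => ES x c)); [constructor|]; auto.
  - apply (steps_map (ES b)); [constructor|]; auto.
Qed.

Lemma steps_fill L a b : steps a b -> steps (fill L a) (fill L b).
Proof. revert a b; induction L; intros; simpl; auto. apply IHL, steps_es; [assumption | apply rt_refl]. Qed.

Inductive par : term -> term -> Prop :=
| par_var i : par (Var i) (Var i)
| par_bot : par Bot Bot
| par_lam t t' : par t t' -> par (Lam t) (Lam t')
| par_app t t' u u' : par t t' -> par u u' -> par (App t u) (App t' u')
| par_es t t' u u' : par t t' -> par u u' -> par (ES t u) (ES t' u')
| par_bang t t' : par t t' -> par (Bang t) (Bang t')
| par_der t t' : par t t' -> par (Der t) (Der t')
| par_beta t L M N N' : par t (fill L (Lam M)) -> par N N' ->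
    par (App t N) (fill L (ES M (lift (length L) 0 N')))
| par_subst M M' t L N : par M M' -> par t (fill L (Bang N)) ->
    par (ES M t) (fill L (inst (cons_shift (length L) N) M'))
| par_dr t L N : par t (fill L (Bang N)) -> par (Der t) (fill L N).

Lemma par_beta_eq t L M N N' X : par t (fill L (Lam M)) -> par N N' ->
  X = fill L (ES M (lift (length L) 0 N')) -> par (App t N) X.
Proof. intros; subst; apply par_beta; auto. Qed.

Lemma par_subst_eq M M' t L N X : par M M' -> par t (fill L (Bang N)) ->
  X = fill L (inst (cons_shift (length L) N) M') -> par (ES M t) X.
Proof. intros; subst; apply par_subst; auto. Qed.

Lemma par_refl t : par t t.
Proof. induction t; constructor; auto. Qed.

Lemma step_par t t' : step t t' -> par t t'.
Proof.
  induction 1; try (constructor; auto using par_refl; fail).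
  rewrite subst_lift_as_inst. apply par_subst; apply par_refl.
Qed.

Lemma par_steps t t' : par t t' -> steps t t'.
Proof.
  induction 1; try apply rt_refl; auto using steps_lam, steps_app, steps_es, steps_bang, steps_der.
  - eapply rt_trans; [apply steps_app; eauto | apply rt_step, st_beta].
  - eapply rt_trans; [apply steps_es; eauto | apply rt_step; rewrite <- subst_lift_as_inst; apply st_subst].
  - eapply rt_trans; [apply steps_der; eauto | apply rt_step, st_der].
Qed.

(* Stated for an arbitrary relation between substitutions so as to give both
   [par_ren] and [par_inst], the latter relying on the former under [up]. *)
Lemma par_inst_rel (R : (nat -> term) -> (nat -> term) -> Prop) :
  (forall s r, R s r -> R (up s) (up r)) ->
  (forall s r, R s r -> forall i, par (s i) (r i)) ->
  forall t t', par t t' -> forall s r, R s r -> par (inst s t) (inst r t').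
Proof.
  intros Hup Hpt; induction 1; intros s r HR; simpl; try (constructor; auto; fail).
  - apply Hpt; auto.
  - specialize (IHpar1 s r HR). rewrite inst_fill in IHpar1.
    eapply par_beta_eq; [exact IHpar1 | apply IHpar2, HR |].
    rewrite inst_fill, length_instL. simpl. rewrite inst_upn_lift0. reflexivity.
  - specialize (IHpar2 s r HR). rewrite inst_fill in IHpar2.
    eapply par_subst_eq; [apply IHpar1, Hup, HR | exact IHpar2 |].
    rewrite inst_fill, inst_upn_cons_shift, length_instL. reflexivity.
  - specialize (IHpar s r HR). rewrite inst_fill in IHpar.
    rewrite inst_fill. apply par_dr. auto.
Qed.

Lemma par_ren t t' xi : par t t' -> par (ren xi t) (ren xi t').
Proof.
  intros. rewrite !ren_as_inst.
  apply (par_inst_rel (fun s r => s = r /\ exists xi, s = fun i => Var (xi i))); eauto.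
  - intros s r [<- [z ->]]. split; [reflexivity|]. exists (upren z).
    extensionality i. destruct i; reflexivity.
  - intros s r [<- [z ->]] i. constructor.
Qed.

Lemma par_lift t t' k c : par t t' -> par (lift k c t) (lift k c t').
Proof. rewrite !lift_as_ren. apply par_ren. Qed.

Lemma par_inst t t' s r : (forall i, par (s i) (r i)) -> par t t' -> par (inst s t) (inst r t').
Proof.
  intros. apply (par_inst_rel (fun s r => forall i, par (s i) (r i))); auto.
  intros s0 r0 H1 [|i]; simpl; [constructor | apply par_ren; auto].
Qed.

Lemma steps_inst t t' s : steps t t' -> steps (inst s t) (inst s t').
Proof.
  induction 1; [| apply rt_refl | eapply rt_trans; eauto].
  apply par_steps, par_inst; [intros; apply par_refl | apply step_par; auto].
Qed.

Lemma steps_lift t t' k c : steps t t' -> steps (lift k c t) (lift k c t').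
Proof. rewrite !lift_as_ren, !ren_as_inst. apply steps_inst. Qed.

Lemma steps_subst t t' c N : steps t t' -> steps (subst c t N) (subst c t' N).
Proof. rewrite !subst_as_inst. apply steps_inst. Qed.

Lemma list_rev_cases (L : list term) : L = [] \/ exists L0 Z, L = L0 ++ [Z].
Proof. destruct L using rev_ind; [left | right]; eauto. Qed.

Lemma par_fill_lam t Y L M : par t Y -> t = fill L (Lam M) ->
  exists L' M', Y = fill L' (Lam M') /\
    forall P P', par P P' ->
      par (fill L (ES M (lift (length L) 0 P))) (fill L' (ES M' (lift (length L') 0 P'))).
Proof.
  intros H; revert L M; induction H; intros L0 M0 E;
    destruct (list_rev_cases L0) as [-> | [L1 [Z ->]]]; rewrite ?fill_app in E; simpl in E;
    try discriminate E; injection E; intros; subst.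
  - exists [], t'. split; [reflexivity|]. intros. simpl. constructor; auto. apply par_lift; auto.
  - destruct (IHpar1 L1 M0 eq_refl) as [L1' [M1 [-> HT]]].
    exists (L1' ++ [u']), M1. split; [rewrite fill_app; reflexivity|].
    intros P P' HP. rewrite !fill_app, !length_app. simpl. rewrite !lift0_add.
    constructor; auto. apply HT, par_lift; auto.
  - destruct (IHpar1 L1 M0 eq_refl) as [L1' [M1 [-> HT]]].
    exists (instL (cons_shift (length L) N) L1' ++ L),
      (inst (up (upn (length L1') (cons_shift (length L) N))) M1).
    split; [rewrite inst_fill, fill_app; reflexivity|].
    intros P P' HP. rewrite !fill_app, !length_app. simpl. rewrite lift0_add.
    eapply par_subst_eq; [apply HT, par_lift, HP | exact H0 |].
    rewrite inst_fill. simpl. rewrite inst_upn_cons_shift_lift0, length_instL. reflexivity.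
Qed.

Lemma par_fill_bang t Y L N : par t Y -> t = fill L (Bang N) ->
  exists L' N', Y = fill L' (Bang N') /\ par (fill L N) (fill L' N') /\
    forall Q Q', par Q Q' ->
      par (fill L (inst (cons_shift (length L) N) Q)) (fill L' (inst (cons_shift (length L') N') Q')).
Proof.
  intros H; revert L N; induction H; intros L0 N0 E;
    destruct (list_rev_cases L0) as [-> | [L1 [Z ->]]]; rewrite ?fill_app in E; simpl in E;
    try discriminate E; injection E; intros; subst.
  - destruct (IHpar1 L1 N0 eq_refl) as [L1' [N1 [-> [HA HT]]]].
    exists (L1' ++ [u']), N1. split; [rewrite fill_app; reflexivity|].
    split; [rewrite !fill_app; constructor; auto|].
    intros Q Q' HQ. rewrite !fill_app, !length_app. simpl. rewrite <- !inst_cons_shift_lift1.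
    constructor; auto. apply HT, par_lift; auto.
  - exists [], t'. split; [reflexivity|]. split; [assumption|]. intros. simpl.
    apply par_inst; auto. intros [|i]; simpl; auto using par_refl.
  - destruct (IHpar1 L1 N0 eq_refl) as [L1' [N1 [-> [HA HT]]]].
    exists (instL (cons_shift (length L) N) L1' ++ L),
      (inst (upn (length L1') (cons_shift (length L) N)) N1).
    split; [rewrite inst_fill, fill_app; reflexivity|].
    split.
    + rewrite !fill_app. simpl. eapply par_subst_eq; [exact HA | exact H0 |].
      rewrite inst_fill. reflexivity.
    + intros Q Q' HQ. rewrite !fill_app, !length_app. simpl. rewrite <- inst_cons_shift_lift1.
      eapply par_subst_eq; [apply HT, par_lift, HQ | exact H0 |].
      rewrite inst_fill, inst_upn_cons_shift_lift1, length_instL. reflexivity.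
Qed.

Fixpoint spine (t : term) : list term * term :=
  match t with
  | ES a b => (fst (spine a) ++ [b], snd (spine a))
  | _ => ([], t)
  end.

Lemma fill_spine t : fill (fst (spine t)) (snd (spine t)) = t.
Proof. induction t; simpl; auto. rewrite fill_app. simpl. congruence. Qed.

Lemma spine_eq t L h : spine t = (L, h) -> t = fill L h.
Proof. intros E. rewrite <- (fill_spine t), E. reflexivity. Qed.

Lemma spine_fill L t : spine (fill L t) = (fst (spine t) ++ L, snd (spine t)).
Proof.
  revert t; induction L; intros t; simpl.
  - rewrite app_nil_r. destruct (spine t); reflexivity.
  - rewrite IHL. simpl. rewrite <- app_assoc. reflexivity.
Qed.

Fixpoint develop (t : term) : term :=
  match t with
  | Var i => Var i
  | Bot => Bot
  | Lam a => Lam (develop a)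
  | Bang a => Bang (develop a)
  | App a b =>
      match spine (develop a) with
      | (L, Lam M) => fill L (ES M (lift (length L) 0 (develop b)))
      | _ => App (develop a) (develop b)
      end
  | ES a b =>
      match spine (develop b) with
      | (L, Bang N) => fill L (inst (cons_shift (length L) N) (develop a))
      | _ => ES (develop a) (develop b)
      end
  | Der a =>
      match spine (develop a) with
      | (L, Bang N) => fill L N
      | _ => Der (develop a)
      end
  end.

Lemma par_develop t u : par t u -> par u (develop t).
Proof.
  induction 1; simpl; try (constructor; auto; fail).
  - destruct (spine (develop t)) as [L []] eqn:E; apply spine_eq in E; rewrite E in *;
      constructor; auto.
  - destruct (spine (develop u)) as [L []] eqn:E; apply spine_eq in E; rewrite E in *;
      constructor; auto.
  - destruct (spine (develop t)) as [L []] eqn:E; apply spine_eq in E; rewrite E in *;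
      constructor; auto.
  - destruct (par_fill_lam _ _ L M IHpar1 eq_refl) as [L' [M' [-> HT]]].
    rewrite spine_fill. apply HT; auto.
  - destruct (par_fill_bang _ _ L N IHpar2 eq_refl) as [L' [N' [-> [_ HT]]]].
    rewrite spine_fill. apply HT; auto.
  - destruct (par_fill_bang _ _ L N IHpar eq_refl) as [L' [N' [-> [HA _]]]].
    rewrite spine_fill. auto.
Qed.

Definition pars : term -> term -> Prop := clos_refl_trans term par.

Lemma pars_strip t u2 u1 : pars t u2 -> par t u1 -> exists v, pars u1 v /\ par u2 v.
Proof.
  intros H; revert u1; induction H; intros u1 H1.
  - exists (develop x). split; [apply rt_step|]; apply par_develop; auto.
  - exists u1. split; [apply rt_refl | auto].
  - destruct (IHclos_refl_trans1 u1 H1) as [v1 [A1 B1]].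
    destruct (IHclos_refl_trans2 v1 B1) as [v2 [A2 B2]].
    exists v2. split; [eapply rt_trans|]; eauto.
Qed.

Lemma pars_confluent t u1 u2 : pars t u1 -> pars t u2 -> exists v, pars u1 v /\ pars u2 v.
Proof.
  intros H; revert u2; induction H; intros u2 H2.
  - destruct (pars_strip _ _ _ H2 H) as [v [A B]]. exists v. split; [assumption | apply rt_step, B].
  - exists u2. split; [assumption | apply rt_refl].
  - destruct (IHclos_refl_trans1 u2 H2) as [v1 [A1 B1]].
    destruct (IHclos_refl_trans2 v1 A1) as [v2 [A2 B2]].
    exists v2. split; [| eapply rt_trans]; eauto.
Qed.

Lemma steps_pars a b : steps a b <-> pars a b.
Proof.
  split; induction 1; try (apply rt_refl); try (eapply rt_trans; eassumption).
  - apply rt_step, step_par; assumption.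
  - apply par_steps; assumption.
Qed.

Theorem steps_confluent t u1 u2 : steps t u1 -> steps t u2 -> exists v, steps u1 v /\ steps u2 v.
Proof.
  rewrite !steps_pars. intros H1 H2. destruct (pars_confluent _ _ _ H1 H2) as [v [A B]].
  exists v; rewrite !steps_pars; auto.
Qed.

Section RtermInd.
Variable P : rterm -> Prop.
Hypothesis HVar : forall i, P (RVar i).
Hypothesis HLam : forall m, P m -> P (RLam m).
Hypothesis HApp : forall m n, P m -> P n -> P (RApp m n).
Hypothesis HES : forall m n, P m -> P n -> P (RES m n).
Hypothesis HDer : forall m, P m -> P (RDer m).
Hypothesis HBag : forall ms, Forall P ms -> P (RBag ms).

Fixpoint rterm_nested_ind (m : rterm) : P m :=
  match m with
  | RVar i => HVar i
  | RLam m => HLam m (rterm_nested_ind m)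
  | RApp m n => HApp m n (rterm_nested_ind m) (rterm_nested_ind n)
  | RES m n => HES m n (rterm_nested_ind m) (rterm_nested_ind n)
  | RDer m => HDer m (rterm_nested_ind m)
  | RBag ms => HBag ms ((fix go (l : list rterm) : Forall P l :=
                          match l with
                          | [] => Forall_nil P
                          | x :: l' => Forall_cons x (rterm_nested_ind x) (go l')
                          end) ms)
  end.
End RtermInd.

Lemma rsteps_map (f : rterm -> rterm) :
  (forall x y, rstep x (Some y) -> rstep (f x) (Some (f y))) ->
  forall a b, rsteps a b -> rsteps (f a) (f b).
Proof. intros Hf a b H; induction H; [apply rt_step | apply rt_refl | eapply rt_trans]; eauto. Qed.

Lemma rsteps_bag ms ns pre :
  Forall2 rsteps ms ns -> rsteps (RBag (pre ++ ms)) (RBag (pre ++ ns)).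
Proof.
  intros H; revert pre; induction H as [|m n ms ns Hmn _ IH]; intros pre; [apply rt_refl|].
  apply rt_trans with (RBag (pre ++ n :: ms)).
  - apply (rsteps_map (fun z => RBag (pre ++ z :: ms))); [|exact Hmn].
    intros a b Hab. exact (rs_bag pre a ms (Some b) Hab).
  - specialize (IH (pre ++ [n])). rewrite <- !app_assoc in IH. exact IH.
Qed.

Lemma rnormal_lam m : rnormal (RLam m) -> rnormal m.
Proof. intros H r Hs. eapply H, rs_lam, Hs. Qed.

Lemma rnormal_app_l m n : rnormal (RApp m n) -> rnormal m.
Proof. intros H r Hs. eapply H, rs_app_l, Hs. Qed.

Lemma rnormal_app_r m n : rnormal (RApp m n) -> rnormal n.
Proof. intros H r Hs. eapply H, rs_app_r, Hs. Qed.

Lemma rnormal_es_l m n : rnormal (RES m n) -> rnormal m.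
Proof. intros H r Hs. eapply H, rs_es_l, Hs. Qed.

Lemma rnormal_es_r m n : rnormal (RES m n) -> rnormal n.
Proof. intros H r Hs. eapply H, rs_es_r, Hs. Qed.

Lemma rnormal_der m : rnormal (RDer m) -> rnormal m.
Proof. intros H r Hs. eapply H, rs_der_c, Hs. Qed.

Lemma rnormal_bag ms x : rnormal (RBag ms) -> In x ms -> rnormal x.
Proof.
  intros H Hx r Hs. apply in_split in Hx as [l1 [l2 ->]]. eapply H, rs_bag, Hs.
Qed.

Lemma occ_rlift a k c d : c < d -> occ c (rlift k d a) = occ c a.
Proof.
  revert k c d; induction a using rterm_nested_ind; intros k c d Hcd; simpl;
    try (rewrite IHa1, IHa2 by lia); try (apply IHa; lia); try reflexivity.
  - destruct (Nat.leb_spec d i); simpl; [|reflexivity].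
    destruct (Nat.eqb_spec (i + k) c), (Nat.eqb_spec i c); lia.
  - induction H; simpl; [reflexivity|]. rewrite H, IHForall by lia; reflexivity.
Qed.

Lemma split_list {A} (ns : list A) a b : a + b = length ns ->
  exists ns1 ns2, ns = ns1 ++ ns2 /\ length ns1 = a /\ length ns2 = b.
Proof.
  intros. exists (firstn a ns), (skipn a ns).
  rewrite firstn_skipn, length_firstn, length_skipn. split; [reflexivity | lia].
Qed.

Lemma lsub_exists m c ns : occ c m = length ns -> exists m', lsub c m ns m'.
Proof.
  revert c ns; induction m using rterm_nested_ind; intros c ns Hl; simpl in Hl.
  - destruct (Nat.eqb_spec i c) as [->|Hne].
    + destruct ns as [|n [|]]; simpl in Hl; try lia. eexists. constructor.
    + destruct ns; simpl in Hl; try lia.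
      destruct (Nat.lt_ge_cases i c); [eexists; constructor; auto|].
      destruct i; [lia|]. eexists. apply ls_var_gt. lia.
  - destruct (IHm (S c) ns Hl) as [m' H]. eexists. constructor; eauto.
  - destruct (split_list ns _ _ Hl) as [ns1 [ns2 [-> [L1 L2]]]].
    destruct (IHm1 c ns1 (eq_sym L1)) as [a H1], (IHm2 c ns2 (eq_sym L2)) as [b H2].
    eexists. eapply ls_app; eauto.
  - destruct (split_list ns _ _ Hl) as [ns1 [ns2 [-> [L1 L2]]]].
    destruct (IHm1 (S c) ns1 (eq_sym L1)) as [a H1], (IHm2 c ns2 (eq_sym L2)) as [b H2].
    eexists. eapply ls_es; eauto.
  - destruct (IHm c ns Hl) as [m' H]. eexists. constructor; eauto.
  - revert ns Hl. induction H as [|m ms Hm _ IH]; intros ns Hl; simpl in Hl.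
    + destruct ns; simpl in Hl; try lia. eexists. constructor.
    + destruct (split_list ns _ _ Hl) as [ns1 [ns2 [-> [L1 L2]]]].
      destruct (Hm c ns1 (eq_sym L1)) as [a H1], (IH ns2 (eq_sym L2)) as [b H2].
      inversion H2; subst; eexists; eapply ls_bag_cons; eauto.
Qed.

Lemma beta_redex_not_rnormal l m n : ~ rnormal (RApp (rfill l (RLam m)) n).
Proof. intros H. eapply H, rs_beta. Qed.

Lemma der_redex_not_rnormal l ms : ~ rnormal (RDer (rfill l (RBag ms))).
Proof.
  intros H. destruct (Nat.eq_dec (length ms) 1) as [E|E].
  - destruct ms as [|m [|]]; simpl in E; try lia. eapply H, rs_der1.
  - eapply H, rs_der0, E.
Qed.

Lemma subst_redex_not_rnormal l m ns : ~ rnormal (RES m (rfill l (RBag ns))).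
Proof.
  intros H. destruct (Nat.eq_dec (occ 0 m) (length ns)) as [E|E].
  - rewrite <- (occ_rlift m (length l) 0 1) in E by lia.
    destruct (lsub_exists _ _ _ E) as [m' Hm]. eapply H, rs_subst, Hm.
  - eapply H, rs_subst0, E.
Qed.

(** * Taylor expansion along reduction *)

Lemma list_choice_map {A B} (f : A -> B) (P : A -> Prop) (zs : list B) :
  (forall z, In z zs -> exists y, z = f y /\ P y) ->
  exists ys, zs = map f ys /\ forall y, In y ys -> P y.
Proof.
  induction zs as [|z zs IH]; intros H; [exists []; split; [reflexivity | intros _ []]|].
  destruct (H z (or_introl eq_refl)) as [y [-> Hy]].
  destruct IH as [ys [-> Hys]]; [intros; apply H; right; assumption|].
  exists (y :: ys). split; [reflexivity | intros x [<- | Hx]; auto].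
Qed.

Lemma list_choice_Forall2 {A B} (R : A -> B -> Prop) (P : A -> Prop) (zs : list B) :
  (forall z, In z zs -> exists y, P y /\ R y z) ->
  exists ys, (forall y, In y ys -> P y) /\ Forall2 R ys zs.
Proof.
  induction zs as [|z zs IH]; intros H; [exists []; split; [intros _ [] | constructor]|].
  destruct (H z (or_introl eq_refl)) as [y [Py Ryz]].
  destruct IH as [ys [Hys HF]]; [intros; apply H; right; assumption|].
  exists (y :: ys). split; [intros x [<- | Hx]; auto | constructor; assumption].
Qed.

Lemma rapprox_fill l L h H :
  Forall2 rapprox l L -> rapprox h H -> rapprox (rfill l h) (fill L H).
Proof. intros HF; revert h H; induction HF; intros; simpl; auto. apply IHHF. constructor; auto. Qed.

Lemma rapprox_fill_inv L n H : rapprox n (fill L H) ->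
  exists l h, n = rfill l h /\ Forall2 rapprox l L /\ rapprox h H.
Proof.
  revert n H; induction L; intros n H Hr; simpl in *; [exists [], n; auto|].
  destruct (IHL _ _ Hr) as [l [h [-> [HF Hh]]]]. inversion Hh; subst.
  eexists (_ :: l), _. split; [reflexivity | split; eauto].
Qed.

Lemma rapprox_rfill_inv l h X : rapprox (rfill l h) X ->
  exists L H, X = fill L H /\ Forall2 rapprox l L /\ rapprox h H.
Proof.
  revert h X; induction l; intros h X Hr; simpl in *; [exists [], X; auto|].
  destruct (IHl _ _ Hr) as [L [H [-> [HF HH]]]]. inversion HH; subst.
  eexists (_ :: L), _. split; [reflexivity | split; eauto].
Qed.

Lemma rapprox_bot_le A N m : bot_le A N -> rapprox m A -> rapprox m N.
Proof. intros H; revert m; induction H; intros m Hm; inversion Hm; subst; constructor; auto. Qed.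

Ltac inv_rapprox H :=
  inversion H as [| ? ? Ha | ? ? ? ? Ha Hb | ? ? ? ? Ha Hb | ? ? Ha | ? ? Hall]; subst.

Lemma rapprox_lift_inv M n k c : rapprox n (lift k c M) ->
  exists n0, n = rlift k c n0 /\ rapprox n0 M.
Proof.
  revert n k c; induction M; intros r k c Hn; simpl in Hn.
  - exists (RVar n). simpl. destruct (c <=? n); inversion Hn; split; auto; constructor.
  - inv_rapprox Hn. destruct (IHM _ _ _ Ha) as [a [-> H]].
    exists (RLam a); split; [|constructor]; auto.
  - inv_rapprox Hn. destruct (IHM1 _ _ _ Ha) as [a [-> Ha']], (IHM2 _ _ _ Hb) as [b [-> Hb']].
    exists (RApp a b); split; [|constructor]; auto.
  - inv_rapprox Hn. destruct (IHM1 _ _ _ Ha) as [a [-> Ha']], (IHM2 _ _ _ Hb) as [b [-> Hb']].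
    exists (RES a b); split; [|constructor]; auto.
  - inv_rapprox Hn.
    destruct (list_choice_map (rlift k c) (fun y => rapprox y M) ms) as [ms0 [-> Hms]]; auto.
    exists (RBag ms0). split; [|constructor]; auto.
  - inv_rapprox Hn. destruct (IHM _ _ _ Ha) as [a [-> H]].
    exists (RDer a); split; [|constructor]; auto.
  - inversion Hn.
Qed.

Lemma lsub_bag c (P : rterm -> Prop) ys zs :
  Forall2 (fun y z => exists ns, (forall x, In x ns -> P x) /\ lsub c y ns z) ys zs ->
  exists ns, (forall x, In x ns -> P x) /\ lsub c (RBag ys) ns (RBag zs).
Proof.
  induction 1 as [|y z ys zs [ns1 [Hns1 H1]] _ [ns2 [Hns2 H2]]].
  - exists []. split; [intros _ [] | constructor].
  - exists (ns1 ++ ns2). split; [intros x [Hx|Hx]%in_app_or; auto|].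
    eapply ls_bag_cons; eauto.
Qed.

Lemma rapprox_subst_var_inv n c N m : rapprox m (subst c (Var n) N) ->
  exists ns, (forall x, In x ns -> rapprox x N) /\ lsub c (RVar n) ns m.
Proof.
  intros Hm. destruct (Nat.lt_total n c) as [Hl | [-> | Hg]].
  - rewrite subst_var_lt in Hm by auto. inversion Hm; subst.
    exists []. split; [intros _ [] | constructor; auto].
  - rewrite subst_var_eq in Hm. destruct (rapprox_lift_inv _ _ _ _ Hm) as [n0 [-> H]].
    exists [n0]. split; [intros x [<- | []]; auto | constructor].
  - destruct n as [|j]; [lia|]. rewrite subst_var_gt in Hm by lia. inversion Hm; subst.
    exists []. split; [intros _ [] | constructor; lia].
Qed.

Lemma rapprox_subst_inv M m c N : rapprox m (subst c M N) ->
  exists m0 ns, rapprox m0 M /\ (forall x, In x ns -> rapprox x N) /\ lsub c m0 ns m.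
Proof.
  revert m c; induction M; intros m c Hm;
    [ destruct (rapprox_subst_var_inv _ _ _ _ Hm) as [ns [Hns Hl]];
      exists (RVar n), ns; repeat split; auto; constructor
    | simpl in Hm; inv_rapprox Hm .. ].
  - destruct (IHM _ _ Ha) as [a [ns [Ha' [Hns Hl]]]].
    exists (RLam a), ns. repeat split; auto; constructor; auto.
  - destruct (IHM1 _ _ Ha) as [a [ns1 [Ha' [Hns1 Hl1]]]].
    destruct (IHM2 _ _ Hb) as [b [ns2 [Hb' [Hns2 Hl2]]]].
    exists (RApp a b), (ns1 ++ ns2). repeat split; [constructor; auto | |].
    + intros x [Hx|Hx]%in_app_or; auto.
    + eapply ls_app; eauto.
  - destruct (IHM1 _ _ Ha) as [a [ns1 [Ha' [Hns1 Hl1]]]].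
    destruct (IHM2 _ _ Hb) as [b [ns2 [Hb' [Hns2 Hl2]]]].
    exists (RES a b), (ns1 ++ ns2). repeat split; [constructor; auto | |].
    + intros x [Hx|Hx]%in_app_or; auto.
    + eapply ls_es; eauto.
  - destruct (list_choice_Forall2
      (fun y z => exists ns, (forall x, In x ns -> rapprox x N) /\ lsub c y ns z)
      (fun y => rapprox y M) ms) as [ys [Hys HF]].
    { intros z Hz. destruct (IHM _ _ (Hall z Hz)) as [y [ns [Hy Hns]]]. eauto. }
    destruct (lsub_bag _ _ _ _ HF) as [ns [Hns Hl]].
    exists (RBag ys), ns. repeat split; auto. constructor; auto.
  - destruct (IHM _ _ Ha) as [a [ns [Ha' [Hns Hl]]]].
    exists (RDer a), ns. repeat split; auto; constructor; auto.
Qed.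

Lemma rsteps_lam m m' : rsteps m m' -> rsteps (RLam m) (RLam m').
Proof. apply rsteps_map. intros a b H. exact (rs_lam a (Some b) H). Qed.

Lemma rsteps_app_l m m' n : rsteps m m' -> rsteps (RApp m n) (RApp m' n).
Proof. apply (rsteps_map (fun z => RApp z n)). intros a b H. exact (rs_app_l a n (Some b) H). Qed.

Lemma rsteps_app_r m n n' : rsteps n n' -> rsteps (RApp m n) (RApp m n').
Proof. apply rsteps_map. intros a b H. exact (rs_app_r m a (Some b) H). Qed.

Lemma rsteps_es_l m m' n : rsteps m m' -> rsteps (RES m n) (RES m' n).
Proof. apply (rsteps_map (fun z => RES z n)). intros a b H. exact (rs_es_l a n (Some b) H). Qed.

Lemma rsteps_es_r m n n' : rsteps n n' -> rsteps (RES m n) (RES m n').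
Proof. apply rsteps_map. intros a b H. exact (rs_es_r m a (Some b) H). Qed.

Lemma rsteps_der m m' : rsteps m m' -> rsteps (RDer m) (RDer m').
Proof. apply rsteps_map. intros a b H. exact (rs_der_c a (Some b) H). Qed.

Lemma taylor_step_back M N n : step M N -> rapprox n N -> exists m, rapprox m M /\ rsteps m n.
Proof.
  intros H; revert n; induction H; intros n Hn.
  - destruct (rapprox_fill_inv _ _ _ Hn) as [l [h [-> [HF Hh]]]].
    inv_rapprox Hh. destruct (rapprox_lift_inv _ _ _ _ Hb) as [b [-> Hb']].
    exists (RApp (rfill l (RLam m)) b). split.
    + constructor; auto. apply rapprox_fill; auto. constructor; auto.
    + apply rt_step. rewrite <- (Forall2_length HF). apply rs_beta.
  - destruct (rapprox_fill_inv _ _ _ Hn) as [l [h [-> [HF Hh]]]].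
    destruct (rapprox_subst_inv _ _ _ _ Hh) as [h0 [ns [Hh0 [Hns Hl]]]].
    destruct (rapprox_lift_inv _ _ _ _ Hh0) as [a [-> Ha]].
    exists (RES a (rfill l (RBag ns))). split.
    + constructor; auto. apply rapprox_fill; auto. constructor; auto.
    + apply rt_step, rs_subst. rewrite (Forall2_length HF). auto.
  - destruct (rapprox_fill_inv _ _ _ Hn) as [l [h [-> [HF Hh]]]].
    exists (RDer (rfill l (RBag [h]))). split.
    + constructor. apply rapprox_fill; auto. constructor. intros x [<- | []]; auto.
    + apply rt_step, rs_der1.
  - inv_rapprox Hn. destruct (IHstep _ Ha) as [w [Hw Hs]].
    exists (RLam w). split; [constructor | apply rsteps_lam]; auto.
  - inv_rapprox Hn. destruct (IHstep _ Ha) as [w [Hw Hs]].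
    exists (RApp w n0). split; [constructor | apply rsteps_app_l]; auto.
  - inv_rapprox Hn. destruct (IHstep _ Hb) as [w [Hw Hs]].
    exists (RApp m w). split; [constructor | apply rsteps_app_r]; auto.
  - inv_rapprox Hn. destruct (IHstep _ Ha) as [w [Hw Hs]].
    exists (RES w n0). split; [constructor | apply rsteps_es_l]; auto.
  - inv_rapprox Hn. destruct (IHstep _ Hb) as [w [Hw Hs]].
    exists (RES m w). split; [constructor | apply rsteps_es_r]; auto.
  - inv_rapprox Hn.
    destruct (list_choice_Forall2 rsteps (fun w => rapprox w t) ms) as [ws [Hws HF]];
      [intros z Hz; apply IHstep, Hall, Hz|].
    exists (RBag ws). split; [constructor; auto | apply (rsteps_bag _ _ [] HF)].
  - inv_rapprox Hn. destruct (IHstep _ Ha) as [w [Hw Hs]].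
    exists (RDer w). split; [constructor | apply rsteps_der]; auto.
Qed.

Lemma taylor_steps_back M N n : steps M N -> rapprox n N -> exists m, rapprox m M /\ rsteps m n.
Proof.
  intros H; revert n; induction H; intros n Hn.
  - eapply taylor_step_back; eauto.
  - exists n. split; [assumption | apply rt_refl].
  - destruct (IHclos_refl_trans2 _ Hn) as [m1 [H1 S1]].
    destruct (IHclos_refl_trans1 _ H1) as [m0 [Hm0 S0]].
    exists m0. split; [|eapply rt_trans]; eauto.
Qed.

(** * Approximants *)

Local Hint Constructors subterm : core.

Lemma subterm_trans r s t : subterm r s -> subterm s t -> subterm r t.
Proof. intros H1 H2; induction H2; auto. Qed.

Lemma approximant_subterm A s : approximant A -> subterm s A -> approximant s.
Proof. intros HA Hs t Ht. apply HA. eapply subterm_trans; eauto. Qed.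

Ltac prove_forbidden :=
  unshelve (do 3 eexists; repeat (first [left; reflexivity | right]); reflexivity); exact Bot.

Lemma rnormal_of_approximant A m : approximant A -> rapprox m A -> rnormal m.
Proof.
  intros HA Hm r Hs. revert A HA Hm. induction Hs; intros A HA Hm; inv_rapprox Hm;
    try (eapply IHHs; [| eassumption]; eapply approximant_subterm; [exact HA | auto]; fail).
  1-5: match goal with Hf : rapprox (rfill _ _) _ |- _ =>
         destruct (rapprox_rfill_inv _ _ _ Hf) as [L [X [-> [_ Hh]]]] end;
       inversion Hh; subst; apply (HA _ (sub_refl _)); prove_forbidden.
  eapply IHHs; [| apply Hall, in_or_app; right; left; reflexivity].
  eapply approximant_subterm; [exact HA | auto].
Qed.

Definition lam_or_bot_head (t : term) : bool :=
  match snd (spine t) with Lam _ | Bot => true | _ => false end.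

Definition bang_or_bot_head (t : term) : bool :=
  match snd (spine t) with Bang _ | Bot => true | _ => false end.

Definition forbiddenb (t : term) : bool :=
  match t with
  | App a _ => lam_or_bot_head a
  | Der a => bang_or_bot_head a
  | ES _ b => bang_or_bot_head b
  | _ => false
  end.

Lemma forbidden_iff t : forbidden t <-> forbiddenb t = true.
Proof.
  split.
  - intros [L [A [B H]]].
    destruct H as [H|[H|[H|[H|[H|H]]]]]; subst; simpl;
      unfold lam_or_bot_head, bang_or_bot_head; rewrite spine_fill; reflexivity.
  - destruct t; simpl; try discriminate;
      unfold lam_or_bot_head, bang_or_bot_head;
      match goal with |- context [spine ?a] =>
        destruct (spine a) as [L []] eqn:E; apply spine_eq in E; subst; try discriminate
      end; intros _; prove_forbidden.
Qed.

Lemma forbidden_rapprox_not_rnormal A m : forbidden A -> rapprox m A -> ~ rnormal m.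
Proof.
  intros [L [A' [B H]]] Hm.
  destruct H as [H|[H|[H|[H|[H|H]]]]]; subst; inv_rapprox Hm;
    match goal with Hf : rapprox _ (fill _ _) |- _ =>
      destruct (rapprox_fill_inv _ _ _ Hf) as [l [h [-> [_ Hh]]]] end;
    inversion Hh; subst;
    eauto using beta_redex_not_rnormal, der_redex_not_rnormal, subst_redex_not_rnormal.
Qed.

(* A normal resource term cannot approximate a redex, so it only sees the
   part of [N] left untouched by the step. *)
Lemma rapprox_rnormal_step N N' p : step N N' -> rnormal p -> rapprox p N -> rapprox p N'.
Proof.
  intros H; revert p; induction H; intros p Hn Hp;
    try (exfalso; eapply forbidden_rapprox_not_rnormal; [| eassumption | assumption];
         prove_forbidden);
    inv_rapprox Hp; constructor; eauto using rnormal_lam, rnormal_app_l, rnormal_app_r,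
      rnormal_es_l, rnormal_es_r, rnormal_der.
  intros x Hx. apply IHstep; [eapply rnormal_bag|]; eauto.
Qed.

Lemma rapprox_rnormal_steps N N' p : steps N N' -> rnormal p -> rapprox p N -> rapprox p N'.
Proof. induction 1; eauto using rapprox_rnormal_step. Qed.

Definition prune (t : term) : term := if forbiddenb t then Bot else t.

Fixpoint direct_approx (t : term) : term :=
  match t with
  | Var i => Var i
  | Bot => Bot
  | Lam a => Lam (direct_approx a)
  | Bang a => Bang (direct_approx a)
  | App a b => prune (App (direct_approx a) (direct_approx b))
  | ES a b => prune (ES (direct_approx a) (direct_approx b))
  | Der a => prune (Der (direct_approx a))
  end.

Lemma direct_approx_approximant N : approximant (direct_approx N).
Proof.
  enough (H : forall s, subterm s (direct_approx N) -> forbiddenb s = false)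
    by (intros s Hs; rewrite forbidden_iff, H; [discriminate | exact Hs]).
  induction N; intros s Hs; simpl in Hs; unfold prune in Hs;
    try (destruct (forbiddenb _) eqn:E in Hs); inversion Hs; subst; auto.
Qed.

Lemma direct_approx_bot_le N : bot_le (direct_approx N) N.
Proof.
  induction N; simpl; unfold prune; try destruct (forbiddenb _); constructor; auto.
Qed.

Lemma rapprox_prune p t : rnormal p -> rapprox p t -> rapprox p (prune t).
Proof.
  intros Hn Hp. unfold prune. destruct (forbiddenb t) eqn:E; [|assumption].
  exfalso. apply forbidden_iff in E. exact (forbidden_rapprox_not_rnormal _ _ E Hp Hn).
Qed.

Lemma rapprox_direct_approx N p : rnormal p -> rapprox p N -> rapprox p (direct_approx N).
Proof.
  revert p; induction N; intros p Hn Hp; inv_rapprox Hp; simpl;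
    try apply rapprox_prune; auto; constructor;
    eauto using rnormal_lam, rnormal_app_l, rnormal_app_r, rnormal_es_l, rnormal_es_r, rnormal_der.
  intros x Hx. apply IHN; [eapply rnormal_bag|]; eauto.
Qed.

(** * Normal forms of the Taylor expansion are reached by reduction *)

(* A relaxation of [rapprox] that lets the dBang term reduce before each
   constructor is matched; unlike [rapprox], it is preserved by resource
   reduction. *)
Inductive rapprox_red : rterm -> term -> Prop :=
| rr_var i M : steps M (Var i) -> rapprox_red (RVar i) M
| rr_lam m M X : steps M (Lam X) -> rapprox_red m X -> rapprox_red (RLam m) M
| rr_app m n M X Y : steps M (App X Y) -> rapprox_red m X -> rapprox_red n Y ->
    rapprox_red (RApp m n) M
| rr_es m n M X Y : steps M (ES X Y) -> rapprox_red m X -> rapprox_red n Y ->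
    rapprox_red (RES m n) M
| rr_der m M X : steps M (Der X) -> rapprox_red m X -> rapprox_red (RDer m) M
| rr_bag ms M B : steps M (Bang B) -> (forall m, In m ms -> rapprox_red m B) ->
    rapprox_red (RBag ms) M.

Lemma rapprox_red_expand m M M' : steps M M' -> rapprox_red m M' -> rapprox_red m M.
Proof. intros HS H. inversion H; subst; econstructor; eauto; eapply rt_trans; eauto. Qed.

Lemma rapprox_red_of_rapprox m M : rapprox m M -> rapprox_red m M.
Proof.
  revert M; induction m using rterm_nested_ind; intros M Hm; inv_rapprox Hm;
    econstructor; try apply rt_refl; eauto.
  intros x Hx. rewrite Forall_forall in H. auto.
Qed.

Lemma rapprox_red_lift m M k c : rapprox_red m M -> rapprox_red (rlift k c m) (lift k c M).
Proof.
  revert M k c; induction m using rterm_nested_ind; intros M k c Hm; inversion Hm; subst; simpl;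
    match goal with HS : steps M _ |- _ => apply steps_lift with (k := k) (c := c) in HS end;
    simpl in *; try (econstructor; eauto; fail).
  - destruct (c <=? i); constructor; auto.
  - econstructor; [eassumption|]. rewrite Forall_forall in H.
    intros x [y [<- Hy]]%in_map_iff. auto.
Qed.

Lemma rapprox_red_fill l L h H :
  Forall2 rapprox_red l L -> rapprox_red h H -> rapprox_red (rfill l h) (fill L H).
Proof.
  intros HF; revert h H; induction HF; intros; simpl; auto.
  apply IHHF. econstructor; [apply rt_refl | |]; auto.
Qed.

Lemma rapprox_red_rfill_inv l h X : rapprox_red (rfill l h) X ->
  exists L H, steps X (fill L H) /\ Forall2 rapprox_red l L /\ rapprox_red h H.
Proof.
  revert h X; induction l; intros h X Hr; simpl in *; [exists [], X; split; [apply rt_refl | auto]|].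
  destruct (IHl _ _ Hr) as [L [H [HS [HF HH]]]]. inversion HH; subst.
  exists (Y :: L), X0. split; [|auto].
  eapply rt_trans; [exact HS | simpl; apply steps_fill; assumption].
Qed.

Lemma steps_bang_inv B X : steps (Bang B) X -> exists B', X = Bang B' /\ steps B B'.
Proof.
  intros H. remember (Bang B) as Y eqn:E. revert B E.
  induction H as [x y Hxy | x | x y z _ IH1 _ IH2]; intros B0 ->.
  - inversion Hxy; subst. eexists; split; [reflexivity | apply rt_step; assumption].
  - exists B0. split; [reflexivity | apply rt_refl].
  - destruct (IH1 B0 eq_refl) as [B1 [-> S1]], (IH2 B1 eq_refl) as [B2 [-> S2]].
    exists B2. split; [reflexivity | eapply rt_trans; eauto].
Qed.

Lemma rapprox_red_bang_inv ms B x : rapprox_red (RBag ms) (Bang B) -> In x ms -> rapprox_red x B.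
Proof.
  intros H Hx. inversion H as [| | | | | ? ? B' HS Hms]; subst.
  destruct (steps_bang_inv _ _ HS) as [B'' [E HB]]. injection E as <-.
  eapply rapprox_red_expand; eauto.
Qed.

Lemma rapprox_red_lsub c m ns m' N M : lsub c m ns m' ->
  Forall (fun n => rapprox_red n N) ns -> rapprox_red m M -> rapprox_red m' (subst c M N).
Proof.
  intros H; revert M; induction H; intros M0 Hns HM; inversion HM; subst;
    (eapply rapprox_red_expand; [apply steps_subst; eassumption |]);
    try (rewrite H in Hns; apply Forall_app in Hns as [Hns1 Hns2]).
  - rewrite subst_var_eq. apply rapprox_red_lift. inversion Hns; assumption.
  - rewrite subst_var_lt by assumption. constructor. apply rt_refl.
  - rewrite subst_var_gt by assumption. constructor. apply rt_refl.
  - simpl. econstructor; [apply rt_refl | auto].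
  - simpl. econstructor; [apply rt_refl | auto | auto].
  - simpl. econstructor; [apply rt_refl | auto | auto].
  - simpl. econstructor; [apply rt_refl | auto].
  - simpl. econstructor; [apply rt_refl | intros _ []].
  - match goal with Hin : forall x, In x (m :: ms) -> _ |- _ => rename Hin into Hall end.
    simpl. econstructor; [apply rt_refl|].
    intros x [<- | Hx]; [apply IHlsub1; auto; apply Hall; left; auto|].
    eapply rapprox_red_bang_inv; [|exact Hx].
    change (Bang (subst c B N)) with (subst c (Bang B) N).
    apply IHlsub2; auto. econstructor; [apply rt_refl|]. intros y Hy; apply Hall; right; auto.
Qed.

Lemma rapprox_red_der_root l m M :
  rapprox_red (RDer (rfill l (RBag [m]))) M -> rapprox_red (rfill l m) M.
Proof.
  intros HM. inversion HM as [| | | | ? ? X HS0 Hr |]; subst.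
  destruct (rapprox_red_rfill_inv _ _ _ Hr) as [L [H [HS [HF HH]]]].
  inversion HH as [| | | | | ? ? B HS1 Hin]; subst.
  eapply rapprox_red_expand.
  - eapply rt_trans; [exact HS0 | apply steps_der; eapply rt_trans; [exact HS|]].
    apply steps_fill, HS1.
  - eapply rapprox_red_expand; [apply rt_step, st_der|].
    apply rapprox_red_fill; auto. apply Hin; left; reflexivity.
Qed.

Lemma rapprox_red_beta_root l m n M :
  rapprox_red (RApp (rfill l (RLam m)) n) M -> rapprox_red (rfill l (RES m (rlift (length l) 0 n))) M.
Proof.
  intros HM. inversion HM as [| | ? ? ? X Y HS0 Hr Hn | | |]; subst.
  destruct (rapprox_red_rfill_inv _ _ _ Hr) as [L [H [HS [HF HH]]]].
  inversion HH as [| ? ? A HS1 Hm | | | |]; subst.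
  eapply rapprox_red_expand.
  - eapply rt_trans; [exact HS0 | apply steps_app; [eapply rt_trans; [exact HS|] | apply rt_refl]].
    apply steps_fill, HS1.
  - eapply rapprox_red_expand; [apply rt_step, st_beta|].
    apply rapprox_red_fill; auto. econstructor; [apply rt_refl | assumption |].
    rewrite <- (Forall2_length HF). apply rapprox_red_lift; assumption.
Qed.

Lemma rapprox_red_subst_root l m ns m' M : lsub 0 (rlift (length l) 1 m) ns m' ->
  rapprox_red (RES m (rfill l (RBag ns))) M -> rapprox_red (rfill l m') M.
Proof.
  intros Hl HM. inversion HM as [| | | ? ? ? X Y HS0 Hm Hr | |]; subst.
  destruct (rapprox_red_rfill_inv _ _ _ Hr) as [L [H [HS [HF HH]]]].
  inversion HH as [| | | | | ? ? B HS1 Hin]; subst.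
  eapply rapprox_red_expand.
  - eapply rt_trans; [exact HS0 | apply steps_es; [apply rt_refl | eapply rt_trans; [exact HS|]]].
    apply steps_fill, HS1.
  - eapply rapprox_red_expand; [apply rt_step, st_subst|].
    apply rapprox_red_fill; auto. rewrite (Forall2_length HF) in Hl.
    eapply rapprox_red_lsub; [exact Hl | apply Forall_forall, Hin | apply rapprox_red_lift, Hm].
Qed.

Lemma rapprox_red_rstep m m' M : rstep m (Some m') -> rapprox_red m M -> rapprox_red m' M.
Proof.
  intros H. remember (Some m') as r eqn:E. revert m' E M.
  induction H; intros m0 E M0 HM; try discriminate E;
    try (destruct r as [r|]; simpl in E; [|discriminate E]); injection E as <-.
  - apply rapprox_red_der_root; assumption.
  - apply rapprox_red_beta_root; assumption.
  - eapply rapprox_red_subst_root; eassumption.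
  - inversion HM; subst. econstructor; eauto.
  - inversion HM; subst. econstructor; eauto.
  - inversion HM; subst. econstructor; eauto.
  - inversion HM; subst. econstructor; eauto.
  - inversion HM; subst. econstructor; eauto.
  - inversion HM; subst. econstructor; eauto.
  - inversion HM as [| | | | | ? ? B HS Hin]; subst. econstructor; [eassumption|].
    intros x [Hx | [<- | Hx]]%in_app_or; [| eapply IHrstep |]; eauto using in_or_app, in_cons.
    apply Hin, in_or_app; right; left; reflexivity.
Qed.

Lemma rapprox_red_rsteps m p M : rsteps m p -> rapprox_red m M -> rapprox_red p M.
Proof. intros H; revert M; induction H; eauto using rapprox_red_rstep. Qed.

Lemma rnormal_common_reduct B ms :
  (forall x, In x ms -> rnormal x /\ exists N, steps B N /\ rapprox x N) ->
  exists N, steps B N /\ forall x, In x ms -> rapprox x N.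
Proof.
  induction ms as [|m ms IH]; intros H; [exists B; split; [apply rt_refl | intros _ []]|].
  destruct (H m (or_introl eq_refl)) as [Hn [N1 [HS1 HA1]]].
  destruct IH as [N2 [HS2 HA2]]; [intros; apply H; right; assumption|].
  destruct (steps_confluent _ _ _ HS1 HS2) as [N3 [S1 S2]].
  exists N3. split; [eapply rt_trans; eauto|].
  intros x [<- | Hx].
  - exact (rapprox_rnormal_steps _ _ _ S1 Hn HA1).
  - apply (rapprox_rnormal_steps _ _ _ S2); [apply H; right | apply HA2]; assumption.
Qed.

Lemma rapprox_red_rnormal p M : rnormal p -> rapprox_red p M -> exists N, steps M N /\ rapprox p N.
Proof.
  revert M; induction p using rterm_nested_ind; intros M0 Hn Hr;
    inversion Hr as [? ? HS | ? ? X HS Hm | ? ? ? X Y HS H1 H2 | ? ? ? X Y HS H1 H2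
                    | ? ? X HS Hm | ? ? B HS Hin]; subst.
  - exists (Var i). split; [assumption | constructor].
  - destruct (IHp _ (rnormal_lam _ Hn) Hm) as [N [HSN HA]].
    exists (Lam N). split; [eapply rt_trans; [exact HS | apply steps_lam, HSN] | constructor; auto].
  - destruct (IHp1 _ (rnormal_app_l _ _ Hn) H1) as [N1 [HS1 HA1]].
    destruct (IHp2 _ (rnormal_app_r _ _ Hn) H2) as [N2 [HS2 HA2]].
    exists (App N1 N2). split; [eapply rt_trans; [exact HS | apply steps_app; auto] | constructor; auto].
  - destruct (IHp1 _ (rnormal_es_l _ _ Hn) H1) as [N1 [HS1 HA1]].
    destruct (IHp2 _ (rnormal_es_r _ _ Hn) H2) as [N2 [HS2 HA2]].
    exists (ES N1 N2). split; [eapply rt_trans; [exact HS | apply steps_es; auto] | constructor; auto].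
  - destruct (IHp _ (rnormal_der _ Hn) Hm) as [N [HSN HA]].
    exists (Der N). split; [eapply rt_trans; [exact HS | apply steps_der, HSN] | constructor; auto].
  - rewrite Forall_forall in H.
    destruct (rnormal_common_reduct B ms) as [N [HSN HA]].
    { intros x Hx. pose proof (rnormal_bag _ _ Hn Hx). split; [|apply H]; auto. }
    exists (Bang N). split; [eapply rt_trans; [exact HS | apply steps_bang, HSN] | constructor; auto].
Qed.

Lemma taylor_BT_sub_nf_taylor M p : taylor_BT M p -> nf_taylor M p.
Proof.
  intros [A [[HA [N [HS Hle]]] Hp]].
  split; [eapply rnormal_of_approximant; eauto|].
  apply (taylor_steps_back _ _ _ HS), (rapprox_bot_le _ _ _ Hle), Hp.
Qed.

Lemma nf_taylor_sub_taylor_BT M p : nf_taylor M p -> taylor_BT M p.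
Proof.
  intros [Hn [m [Hm Hs]]].
  destruct (rapprox_red_rnormal p M Hn (rapprox_red_rsteps _ _ _ Hs (rapprox_red_of_rapprox _ _ Hm)))
    as [N [HS HN]].
  exists (direct_approx N). split.
  - split; [apply direct_approx_approximant | exists N; split; [assumption | apply direct_approx_bot_le]].
  - apply rapprox_direct_approx; assumption.
Qed.

Theorem mainTheorem1 (M : term) (HM : bot_free M) :
  rset_eq (taylor_BT M) (nf_taylor M).
Proof.
  intros p. split; intros [q [Hq H]]; exists q; split; auto.
  - apply taylor_BT_sub_nf_taylor; assumption.
  - apply nf_taylor_sub_taylor_BT; assumption.
Qed.
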